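(* In the setting described in the context, let $\sigma$ be a $\Sigma_m$-proximity on $A$. Then the function $$d(x,y)=\tfrac12\big(\sigma(x,x)+\sigma(y,y)\big)-\sigma(x,y)$$ is a metric on $A$ and belongs to $\mathcal{B}_2$.
   Context: $A$ is a nonempty set (possibly infinite); $m\in\mathbb{R}$. A metric on $A$ is a function $d:A^2\to\mathbb{R}$ such that for all $x,y,z\in A$: $d(x,y)=0$ iff $x=y$, and $d(x,y)+d(x,z)-d(y,z)\ge0$. $\mathcal{B}_1$ is a set of functions $A\to\mathbb{R}$ forming a real linear space containing all constant functions, and $\mu:\mathcal{B}_1\to\mathbb{R}$ is a linear functional with $\mu(c)=c$ for every constant function $c$ and monotone: if $f,g\in\mathcal{B}_1$ and $f\ge g$ pointwise, then $\mu(f)\ge\mu(g)$. For $f:A^2\to\mathbb{R}$ such that $y\mapsto f(x,y)$ lies in $\mathcal{B}_1$ for every $x$, write $f(x,\cdot)=\mu(y\mapsto f(x,y))$. $\mathcal{B}_2$ is a set of functions $A^2\to\mathbb{R}$ forming a real linear space that contains all constant functions and all functions $(x,y)\mapsto h(x)$ and $(x,y)\mapsto h(y)$ with $h\in\mathcal{B}_1$, and such that for every $f\in\mathcal{B}_2$: $y\mapsto f(x,y)\in\mathcal{B}_1$ for every $x$, $x\mapsto f(x,\cdot)\in\mathcal{B}_1$, and $x\mapsto f(x,x)\in\mathcal{B}_1$. A function $\sigma\in\mathcal{B}_2$ is a $\Sigma_m$-proximity on $A$ if for all $x,y,z\in A$: (1) $\sigma(x,\cdot)=m$; (2) $\sigma(x,y)+\sigma(x,z)-\sigma(y,z)\le\sigma(x,x)$,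 with strict inequality whenever $z=y$ and $x\ne y$. *)

From Stdlib Require Import Reals.
Open Scope R_scope.

Section Defs.
Variable A : Type.

Definition space1 (B1 : (A -> R) -> Prop) : Prop :=
  (forall c : R, B1 (fun _ => c)) /\
  (forall f g, B1 f -> B1 g -> B1 (fun x => f x + g x)) /\
  (forall (a : R) f, B1 f -> B1 (fun x => a * f x)).

(* mu : B1 -> R linear, normalized on constants, monotone.  mu is given as a
   total function (A -> R) -> R; only its values on B1 matter. *)
Definition mean (B1 : (A -> R) -> Prop) (mu : (A -> R) -> R) : Prop :=
  (forall f g, B1 f -> B1 g -> mu (fun x => f x + g x) = mu f + mu g) /\
  (forall (a : R) f, B1 f -> mu (fun x => a * f x) = a * mu f) /\
  (forall c : R, mu (fun _ => c) = c) /\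
  (forall f g, B1 f -> B1 g -> (forall x, f x >= g x) -> mu f >= mu g).

(* B2: linear space of functions A^2 -> R with the stated closure properties.
   f(x,.) := mu (fun y => f x y). *)
Definition space2 (B1 : (A -> R) -> Prop) (mu : (A -> R) -> R)
    (B2 : (A -> A -> R) -> Prop) : Prop :=
  (forall c : R, B2 (fun _ _ => c)) /\
  (forall f g, B2 f -> B2 g -> B2 (fun x y => f x y + g x y)) /\
  (forall (a : R) f, B2 f -> B2 (fun x y => a * f x y)) /\
  (forall h, B1 h -> B2 (fun x _ => h x)) /\
  (forall h, B1 h -> B2 (fun _ y => h y)) /\
  (forall f, B2 f ->
     (forall x, B1 (fun y => f x y)) /\
     B1 (fun x => mu (fun y => f x y)) /\
     B1 (fun x => f x x)).

Definition sigma_proximity (B2 : (A -> A -> R) -> Prop) (mu : (A -> R) -> R)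
    (m : R) (sigma : A -> A -> R) : Prop :=
  B2 sigma /\
  (forall x, mu (fun y => sigma x y) = m) /\
  (forall x y z, sigma x y + sigma x z - sigma y z <= sigma x x) /\
  (forall x y, x <> y -> sigma x y + sigma x y - sigma y y < sigma x x).

Definition is_metric (d : A -> A -> R) : Prop :=
  (forall x y, d x y = 0 <-> x = y) /\
  (forall x y z, d x y + d x z - d y z >= 0).

End Defs.

From Stdlib Require Import Reals Lra FunctionalExtensionality Classical.
Open Scope R_scope.

(* Expanding d, the quantity d(x,y) + d(x,z) - d(y,z) equals
   sigma(x,x) - (sigma(x,y) + sigma(x,z) - sigma(y,z)), so the triangle
   inequality of d is condition (2) verbatim, and its strict case z = y says
   exactly that d(x,y) > 0 for x <> y.  Membership in B2 holds because d is a
   linear combination of sigma and of its diagonal placed in either variable.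
   Neither the normalisation sigma(x,.) = m nor any property of mu is needed. *)

Section ProximityDistance.
Variable A : Type.

Definition proximity_distance (sigma : A -> A -> R) (x y : A) : R :=
  (1/2) * (sigma x x + sigma y y) - sigma x y.

Lemma proximity_distance_is_metric (sigma : A -> A -> R) :
  (forall x y z, sigma x y + sigma x z - sigma y z <= sigma x x) ->
  (forall x y, x <> y -> sigma x y + sigma x y - sigma y y < sigma x x) ->
  is_metric A (proximity_distance sigma).
Proof.
  intros Htri Hstrict; unfold proximity_distance; split.
  - intros x y; split.
    + intros Hd; apply NNPP; intros Hxy.
      specialize (Hstrict x y Hxy); lra.
    + intros ->; lra.
  - intros x y z; specialize (Htri x y z); lra.
Qed.

Variables (B1 : (A -> R) -> Prop) (mu : (A -> R) -> R)
  (B2 : (A -> A -> R) -> Prop).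
Hypothesis HB2 : space2 A B1 mu B2.

Lemma space2_sub (f g : A -> A -> R) :
  B2 f -> B2 g -> B2 (fun x y => f x y - g x y).
Proof.
  destruct HB2 as [_ [Hadd [Hscale _]]]; intros Hf Hg.
  replace (fun x y => f x y - g x y) with (fun x y => f x y + -1 * g x y).
  - exact (Hadd _ _ Hf (Hscale (-1) g Hg)).
  - do 2 (apply functional_extensionality; intro); ring.
Qed.

Lemma space2_diag_mean (f : A -> A -> R) :
  B2 f -> B2 (fun x y => (1/2) * (f x x + f y y)).
Proof.
  destruct HB2 as [_ [Hadd [Hscale [Hleft [Hright Hproj]]]]]; intros Hf.
  destruct (Hproj f Hf) as [_ [_ Hdiag]].
  exact (Hscale (1/2) _ (Hadd _ _ (Hleft _ Hdiag) (Hright _ Hdiag))).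
Qed.

Lemma proximity_distance_in_space2 (sigma : A -> A -> R) :
  B2 sigma -> B2 (proximity_distance sigma).
Proof.
  intros Hsigma; exact (space2_sub _ _ (space2_diag_mean _ Hsigma) Hsigma).
Qed.

End ProximityDistance.

Theorem proposition3 (A : Type) (HA : inhabited A) (m : R)
    (B1 : (A -> R) -> Prop) (mu : (A -> R) -> R)
    (B2 : (A -> A -> R) -> Prop) (sigma : A -> A -> R) :
  space1 A B1 -> mean A B1 mu -> space2 A B1 mu B2 ->
  sigma_proximity A B2 mu m sigma ->
  is_metric A (fun x y => (1/2) * (sigma x x + sigma y y) - sigma x y) /\
  B2 (fun x y => (1/2) * (sigma x x + sigma y y) - sigma x y).
Proof.
  intros _ _ HB2 [Hsigma [_ [Htri Hstrict]]]; split.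
  - exact (proximity_distance_is_metric A sigma Htri Hstrict).
  - exact (proximity_distance_in_space2 A B1 mu B2 HB2 sigma Hsigma).
Qed.
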